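(* Let $f\in\mathbb{H}$ be a pure unit quaternion, $h\in L^1(\mathbb{R}^2,\mathbb{H})$, $h_{\pm}=\frac12(h\pm fhf)$, and $$\mathcal{F}_D^{f,f}\{h\}(\boldsymbol{\omega})=\int_{\mathbb{R}^2}e^{-f\frac12(x_1\omega_1+x_2\omega_2)}\,h(\mathbf{x})\,e^{-f\frac12(x_1\omega_1-x_2\omega_2)}\,d^2\mathbf{x}.$$ Writing $\mathcal{F}^{f,f}_{D\pm}\{h\}=\mathcal{F}^{f,f}_{D}\{h_{\pm}\}$, one has $$\mathcal{F}^{f,f}_{D+}\{h\}=\int_{\mathbb{R}^2}h_+(\mathbf{x})e^{f x_2\omega_2}d^2\mathbf{x}=\int_{\mathbb{R}^2}e^{-f x_2\omega_2}h_+(\mathbf{x})d^2\mathbf{x},\quad \mathcal{F}^{f,f}_{D-}\{h\}=\int_{\mathbb{R}^2}h_-(\mathbf{x})e^{-f x_1\omega_1}d^2\mathbf{x}=\int_{\mathbb{R}^2}e^{-f x_1\omega_1}h_-(\mathbf{x})d^2\mathbf{x}.$$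
   Context: $\mathbb{H}$ is the real quaternion algebra; a pure unit quaternion $f$ satisfies $f^2=-1$, and $e^{\alpha f}=\cos\alpha+f\sin\alpha$. $d^2\mathbf{x}=dx_1dx_2$. *)

From HB Require Import structures.
From mathcomp Require Import all_boot all_order all_algebra.
From mathcomp Require Import all_classical all_reals all_analysis.
Set Implicit Arguments. Unset Strict Implicit. Unset Printing Implicit Defensive.
Import Order.TTheory GRing.Theory Num.Theory.
Import numFieldNormedType.Exports.
Local Open Scope ring_scope.

(* Real quaternions a + b i + c j + d k *)
Record quat (R : realType) := Quat { q0 : R; q1 : R; q2 : R; q3 : R }.

Section Quat.
Variable R : realType.

Definition qadd (p q : quat R) : quat R :=
  Quat (q0 p + q0 q) (q1 p + q1 q) (q2 p + q2 q) (q3 p + q3 q).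
Definition qscale (a : R) (p : quat R) : quat R :=
  Quat (a * q0 p) (a * q1 p) (a * q2 p) (a * q3 p).
Definition qmul (p q : quat R) : quat R :=
  Quat (q0 p * q0 q - q1 p * q1 q - q2 p * q2 q - q3 p * q3 q)
       (q0 p * q1 q + q1 p * q0 q + q2 p * q3 q - q3 p * q2 q)
       (q0 p * q2 q - q1 p * q3 q + q2 p * q0 q + q3 p * q1 q)
       (q0 p * q3 q + q1 p * q2 q - q2 p * q1 q + q3 p * q0 q).
Definition qreal (a : R) : quat R := Quat a 0 0 0.

Definition pure_unit (f : quat R) : Prop :=
  q0 f = 0 /\ q1 f ^+ 2 + q2 f ^+ 2 + q3 f ^+ 2 = 1.

(* e^{alpha f} = cos alpha + f sin alpha *)
Definition qexp (f : quat R) (alpha : R) : quat R :=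
  qadd (qreal (cos alpha)) (qscale (sin alpha) f).

Definition leb2 := ((@lebesgue_measure R) \x (@lebesgue_measure R))%E.

(* h in L^1(R^2, H): each real component is Lebesgue integrable *)
Definition qintegrable (h : R * R -> quat R) : Prop :=
  [/\ leb2.-integrable setT (fun x => (q0 (h x))%:E),
      leb2.-integrable setT (fun x => (q1 (h x))%:E),
      leb2.-integrable setT (fun x => (q2 (h x))%:E) &
      leb2.-integrable setT (fun x => (q3 (h x))%:E)].

Definition qint (h : R * R -> quat R) : quat R :=
  Quat (Rintegral leb2 setT (fun x => q0 (h x)))
       (Rintegral leb2 setT (fun x => q1 (h x)))
       (Rintegral leb2 setT (fun x => q2 (h x)))
       (Rintegral leb2 setT (fun x => q3 (h x))).

Definition hplus (f : quat R) (h : R * R -> quat R) (x : R * R) : quat R :=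
  qscale (2^-1) (qadd (h x) (qmul f (qmul (h x) f))).
Definition hminus (f : quat R) (h : R * R -> quat R) (x : R * R) : quat R :=
  qscale (2^-1) (qadd (h x) (qscale (-1) (qmul f (qmul (h x) f)))).

Definition FD (f : quat R) (h : R * R -> quat R) (w : R * R) : quat R :=
  qint (fun x => qmul (qexp f (- (2^-1 * (x.1 * w.1 + x.2 * w.2))))
                      (qmul (h x) (qexp f (- (2^-1 * (x.1 * w.1 - x.2 * w.2)))))).

End Quat.

(* The transform is a pointwise identity under the integral.  Since f^2 = -1,
   h_+ anticommutes with f and h_- commutes with f.  Moving the left exponential
   e^{-f a} across h_+ therefore flips its sign (e^{-f a} h_+ = h_+ e^{f a}), while
   across h_- it is unchanged, and the two exponentials then merge by
   e^{f a} e^{f b} = e^{f (a + b)}: the x_1 terms cancel for h_+ and the x_2 terms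
   cancel for h_-. *)
From HB Require Import structures.
From mathcomp Require Import all_boot all_order all_algebra.
From mathcomp Require Import all_classical all_reals all_analysis.
From mathcomp Require Import ring.
Import Order.TTheory GRing.Theory Num.Theory.
Local Open Scope ring_scope.

Section QuaternionAlgebra.
Variable R : realType.
Implicit Types p q r f : quat R.

Ltac quat_ring := rewrite /qmul /qadd /qscale /qreal /=; congr Quat; ring.

Lemma qmulA p q r : qmul p (qmul q r) = qmul (qmul p q) r.
Proof. case: p => ????; case: q => ????; case: r => ????; quat_ring. Qed.

Lemma qmulDl p q r : qmul (qadd p q) r = qadd (qmul p r) (qmul q r).
Proof. case: p => ????; case: q => ????; case: r => ????; quat_ring. Qed.

Lemma qmulDr p q r : qmul r (qadd p q) = qadd (qmul r p) (qmul r q).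
Proof. case: p => ????; case: q => ????; case: r => ????; quat_ring. Qed.

Lemma qmulZl a p q : qmul (qscale a p) q = qscale a (qmul p q).
Proof. case: p => ????; case: q => ????; quat_ring. Qed.

Lemma qmulZr a p q : qmul p (qscale a q) = qscale a (qmul p q).
Proof. case: p => ????; case: q => ????; quat_ring. Qed.

Lemma qmulRl a p : qmul (qreal a) p = qscale a p.
Proof. case: p => ????; quat_ring. Qed.

Lemma qmulRr a p : qmul p (qreal a) = qscale a p.
Proof. case: p => ????; quat_ring. Qed.

Lemma pure_unit_sqr f : pure_unit f -> qmul f f = qreal (-1).
Proof.
case: f => a b c d [/= -> norm1]; rewrite /qmul /qreal /=; congr Quat; try ring.
by transitivity (- (b ^+ 2 + c ^+ 2 + d ^+ 2)); [ring | rewrite norm1].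
Qed.

Lemma qexpD f a b : pure_unit f ->
  qmul (qexp f a) (qexp f b) = qexp f (a + b).
Proof.
move=> pf; rewrite /qexp !qmulDl !qmulDr !qmulRl !qmulRr !qmulZl !qmulZr.
rewrite pure_unit_sqr // cosD sinD; case: f {pf} => ????; quat_ring.
Qed.

Lemma qexp_anticomm f p a : qmul f p = qscale (-1) (qmul p f) ->
  qmul (qexp f a) p = qmul p (qexp f (- a)).
Proof.
move=> fp; rewrite /qexp qmulDl qmulDr qmulRl qmulRr qmulZl qmulZr fp cosN sinN.
case: (qmul p f) => ????; case: p {fp} => ????; quat_ring.
Qed.

Lemma qexp_comm f p a : qmul f p = qmul p f ->
  qmul (qexp f a) p = qmul p (qexp f a).
Proof.
move=> fp; rewrite /qexp qmulDl qmulDr qmulRl qmulRr qmulZl qmulZr fp.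
case: (qmul p f) => ????; case: p {fp} => ????; quat_ring.
Qed.

Lemma qexp_sandwich_anticomm f p a b : pure_unit f ->
  qmul f p = qscale (-1) (qmul p f) ->
  qmul (qexp f a) (qmul p (qexp f b)) = qmul p (qexp f (b - a)).
Proof.
by move=> pf fp; rewrite qmulA qexp_anticomm // -qmulA qexpD // addrC.
Qed.

Lemma qexp_sandwich_comm f p a b : pure_unit f -> qmul f p = qmul p f ->
  qmul (qexp f a) (qmul p (qexp f b)) = qmul p (qexp f (a + b)).
Proof. by move=> pf fp; rewrite qmulA qexp_comm // -qmulA qexpD. Qed.

Lemma hplus_anticomm f h x : pure_unit f ->
  qmul f (hplus f h x) = qscale (-1) (qmul (hplus f h x) f).
Proof.
move=> pf; rewrite /hplus qmulZl qmulZr !qmulDl !qmulDr.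
rewrite (qmulA f f) -(qmulA f (qmul (h x) f)) -(qmulA (h x) f f) pure_unit_sqr //.
rewrite qmulRl qmulRr; case: (h x) => ????; case: f pf => ???? _; quat_ring.
Qed.

Lemma hminus_comm f h x : pure_unit f ->
  qmul f (hminus f h x) = qmul (hminus f h x) f.
Proof.
move=> pf; rewrite /hminus qmulZl qmulZr !qmulDl !qmulDr !qmulZl !qmulZr.
rewrite (qmulA f f) -(qmulA f (qmul (h x) f)) -(qmulA (h x) f f) pure_unit_sqr //.
rewrite qmulRl qmulRr; case: (h x) => ????; case: f pf => ???? _; quat_ring.
Qed.

End QuaternionAlgebra.

Theorem mainTheorem9 (R : realType) (f : quat R) (h : R * R -> quat R) :
  pure_unit f -> qintegrable h ->
  forall w : R * R,
    [/\ FD f (hplus f h) w = qint (fun x => qmul (hplus f h x) (qexp f (x.2 * w.2))),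
        FD f (hplus f h) w = qint (fun x => qmul (qexp f (- (x.2 * w.2))) (hplus f h x)),
        FD f (hminus f h) w = qint (fun x => qmul (hminus f h x) (qexp f (- (x.1 * w.1)))) &
        FD f (hminus f h) w = qint (fun x => qmul (qexp f (- (x.1 * w.1))) (hminus f h x))].
Proof.
move=> pf _ w.
have FD_plus : FD f (hplus f h) w =
    qint (fun x => qmul (hplus f h x) (qexp f (x.2 * w.2))).
  rewrite /FD; congr qint; apply: funext => x.
  rewrite qexp_sandwich_anticomm ?hplus_anticomm //.
  by congr (qmul _ (qexp _ _)); field.
have FD_minus : FD f (hminus f h) w =
    qint (fun x => qmul (hminus f h x) (qexp f (- (x.1 * w.1)))).
  rewrite /FD; congr qint; apply: funext => x.
  rewrite qexp_sandwich_comm ?hminus_comm //.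
  by congr (qmul _ (qexp _ _)); field.
split => //.
- rewrite FD_plus; congr qint; apply: funext => x.
  by rewrite qexp_anticomm ?opprK ?hplus_anticomm.
- rewrite FD_minus; congr qint; apply: funext => x.
  by rewrite qexp_comm ?hminus_comm.
Qed.
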